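(* Let $\mathcal X$ be a nonsingular plane curve of degree $r+1$ and genus $g$ over $\mathbf F_q$ with at least one $\mathbf F_q$-rational point. Let $N$ be an integer with $0\le N\le 2g-2$. Write $\lfloor N/2\rfloor=\alpha r+\beta$ with $0\le\beta<r$, and assume $\alpha\ge1$. (1) If $\lfloor N/2\rfloor$ is a gap of $\mathcal X$, then $R(N)=\min\{\tilde\ell(\lfloor N/2\rfloor)+\tilde\ell(\lceil N/2\rceil),\ \tilde\ell(\alpha r-1)+\tilde\ell(N-\alpha r+1)\}$. (2) If $\lfloor N/2\rfloor\in GS(\mathcal X)$, then $R(N)=\tilde\ell(\alpha r-1)+\tilde\ell(N-\alpha r+1)$.
   Context: $\ell(A)=\dim_{\mathbf F_q}\mathcal L(A)$. For $i\ge1$, $\gamma_i=\min\{\deg A: A\ \mathbf F_q\text{-rational divisor},\ \ell(A)\ge i\}$, and $GS(\mathcal X)=\{\gamma_i:i\ge1\}$. For such a plane curve it is known that $GS(\mathcal X)$ is the numerical semigroup generated by $r$ and $r+1$, and that $g=r(r-1)/2$. Let $\mathbf N'=\{-1,0,1,\dots\}$; a gap is an element of $\mathbf N'\setminus GS(\mathcal X)$. Define $\tilde\ell(-1)=0$ and $\tilde\ell(b)=\max\{i\ge1:\gamma_i\le b\}$ for $b\ge0$. For $-1\le M\le 2g-2$, let $R(M)=\min\{\tilde\ell(a)+\tilde\ell(b):a,b\in\mathbf N',\ a+b=M\}$. *)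

(* Combinatorial model of the Weierstrass-type semigroup
   GS(X) = <r, r+1> of a nonsingular plane curve of degree r+1. *)
From mathcomp Require Import all_boot all_algebra.
Set Implicit Arguments. Unset Strict Implicit. Unset Printing Implicit Defensive.
Import GRing.Theory Num.Theory.

Definition inGS (r k : nat) : bool :=
  [exists a : 'I_k.+1, exists b : 'I_k.+1, (a * r + b * r.+1 == k)%N].

(* membership in GS(X) for an element of N' = {-1,0,1,...} (as an int) *)
Definition inGSz (r : nat) (n : int) : bool :=
  match n with Posz k => inGS r k | Negz _ => false end.

Definition gap (r : nat) (n : int) : bool :=
  ((-1 <= n)%R) && ~~ inGSz r n.

(* ltilde(b) = max{i >= 1 : gamma_i <= b} = #{ s in GS(X) : 0 <= s <= b }
   (gamma_1 < gamma_2 < ... is the increasing enumeration of GS(X));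
   ltilde(-1) = 0 (empty sum). *)
Definition ltilde (r : nat) (b : int) : nat :=
  \sum_(0 <= k < absz (b + 1)%R) nat_of_bool (inGS r k).

(* R(M) = min { ltilde a + ltilde b : a, b in N', a + b = M };
   a ranges over -1 .. M+1 via a = i - 1, i = 0 .. M+2. *)
Definition Rfun (r : nat) (M : int) : nat :=
  \big[minn / (ltilde r (-1) + ltilde r (M + 1))]_(0 <= i < absz (M + 3)%R)
     (ltilde r (i%:Z - 1) + ltilde r (M - (i%:Z - 1))).

(* Put G(i) = l~(i - 1) + l~(N + 1 - i) for 0 <= i <= N + 2, so that R(N) is the
   minimum of G and G(i) = G(N + 2 - i).  As l~(b) counts the elements of
   S = GS(X) up to b, G(i + 1) - G(i) = [i \in S] - [N + 1 - i \in S]: on the left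
   half, G rises across elements of S and falls across gaps.  The elements of
   S = <r, r + 1> in the block [xr, (x + 1)r) are exactly xr, ..., xr + x, so on
   each block G is smallest at an end point.  Since S + r is contained in S, the
   number of elements of S in a window of length r grows with the position of
   the window, hence G(xr) decreases in x up to the middle.  Therefore the
   minimum of G is G(alpha r) or G(floor(N/2) + 1), which is (1) even without the
   gap hypothesis.  If floor(N/2) = alpha r + beta lies in S then beta <= alpha,
   and G rises from alpha r to floor(N/2) + 1, which gives (2). *)

From mathcomp Require Import all_boot all_order all_algebra.
From mathcomp Require Import zify.
Import Order.TTheory.

Set Implicit Arguments.
Unset Strict Implicit.
Unset Printing Implicit Defensive.

Section CountBelow.
Variable S : pred nat.

Definition nbelow (k : nat) : nat := \sum_(0 <= j < k) S j.

Lemma nbelowS k : nbelow k.+1 = nbelow k + S k.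
Proof. by rewrite /nbelow big_nat_recr. Qed.

Lemma nbelowS_le k : nbelow k.+1 <= (nbelow k).+1.
Proof. by rewrite nbelowS addnC; case: (S k). Qed.

Lemma leq_nbelow : {homo nbelow : a b / a <= b}.
Proof. by move=> a b ab; rewrite /nbelow (big_cat_nat (leq0n a) ab) leq_addr. Qed.

Lemma nbelow_window_mono r c d : (forall n, S n -> S (n + r)) -> c <= d ->
  nbelow (c + r) + nbelow d <= nbelow (d + r) + nbelow c.
Proof.
move=> Sr /subnKC <-; elim: (d - c) => [|e IH]; first by rewrite addn0.
rewrite addnS addSn !nbelowS.
by have := Sr (c + e); case: (S (c + e)) => [/(_ isT) -> | _]; lia.
Qed.

Variable K : nat.

(* For S = GS(X) and K = N + 2 this is l~(i - 1) + l~(N + 1 - i). *)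
Definition split_count (i : nat) : nat := nbelow i + nbelow (K - i).

Lemma split_count_sym i : i <= K -> split_count (K - i) = split_count i.
Proof. by move=> iK; rewrite /split_count subKn // addnC. Qed.

Lemma split_count_mem_run a d : a + d <= K ->
  (forall j, a <= j < a + d -> S j) -> split_count a <= split_count (a + d).
Proof.
elim: d => [|d IH] adK memS; first by rewrite addn0.
have step : split_count (a + d) <= split_count (a + d.+1).
  have Sad : S (a + d) by apply: memS; lia.
  rewrite /split_count addnS nbelowS Sad.
  have -> : K - (a + d) = (K - (a + d).+1).+1 by lia.
  by have := nbelowS_le (K - (a + d).+1); lia.
by apply: leq_trans (IH _ _) step => [|j ?]; [lia | apply: memS; lia].
Qed.

Lemma split_count_gap_run a d : a + d <= K ->
  (forall j, a <= j < a + d -> ~~ S j) -> split_count (a + d) <= split_count a.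
Proof.
elim: d => [|d IH] adK gapS; first by rewrite addn0.
have step : split_count (a + d.+1) <= split_count (a + d).
  have /negbTE Sad : ~~ S (a + d) by apply: gapS; lia.
  rewrite /split_count addnS nbelowS Sad addn0 leq_add2l.
  by apply: leq_nbelow; lia.
by apply: leq_trans step (IH _ _) => [|j ?]; [lia | apply: gapS; lia].
Qed.

Lemma split_count_addr r c : (forall n, S n -> S (n + r)) -> c + r + c <= K ->
  split_count (c + r) <= split_count c.
Proof.
move=> Sr crcK; rewrite /split_count.
have cd : c <= K - (c + r) by lia.
have := nbelow_window_mono Sr cd.
have -> : K - (c + r) + r = K - c by lia.
lia.
Qed.

Lemma split_count_addmulr r c m : (forall n, S n -> S (n + r)) ->
  (c + m * r) * 2 <= K + r -> split_count (c + m * r) <= split_count c.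
Proof.
move=> Sr; elim: m => [|m IH] cmK; first by rewrite addn0.
apply: leq_trans (IH _); last by lia.
by rewrite mulSn addnCA addnC; apply: split_count_addr => //; lia.
Qed.

End CountBelow.

Section ConsecutiveSemigroup.
Variable r : nat.

Lemma inGSP k : reflect (exists a b, a * r + b * r.+1 = k) (inGS r k).
Proof.
apply: (iffP existsP) => [[a /existsP [b /eqP <-]] | [a [b abk]]].
  by exists a, b.
have ak : minn a k < k.+1 by rewrite ltnS geq_minr.
have bk : b < k.+1 by rewrite ltnS -abk mulnS; lia.
have minr : minn a k * r = a * r.
  case: (leqP a k) => // ka; case: (posnP r) => [-> | r0]; first by rewrite !muln0.
  by have := leq_pmulr a r0; lia.
by exists (Ordinal ak); apply/existsP; exists (Ordinal bk); rewrite /= minr abk.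
Qed.

Lemma inGS_addr n : inGS r n -> inGS r (n + r).
Proof. by move=> /inGSP [a [b <-]]; apply/inGSP; exists a.+1, b; lia. Qed.

Lemma inGS_mulr_addn x t : t < r -> inGS r (x * r + t) = (t <= x).
Proof.
move=> tr; apply/inGSP/idP => [[a [b abxt]] | tx]; last first.
  by exists (x - t), t; rewrite mulnS addnCA -mulnDl subnK // addnC.
have bt : t <= b.
  have : (a + b) * r + b = x * r + t by rewrite -abxt mulnS mulnDl; lia.
  move=> /(congr1 (modn^~ r)); rewrite /= !modnMDl (modn_small tr) => <-.
  exact: leq_mod.
nia.
Qed.

End ConsecutiveSemigroup.

Section SplitCountSemigroup.
Variables r K : nat.
Local Notation G := (split_count (inGS r) K).

Lemma split_count_block_rise x t : t <= x.+1 -> t <= r -> x * r + t <= K ->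
  G (x * r) <= G (x * r + t).
Proof.
move=> tx tr tK; apply: split_count_mem_run => // j /andP [jl jr].
by rewrite -(subnKC jl) inGS_mulr_addn; lia.
Qed.

Lemma split_count_block_fall x t d : x < t -> t + d <= r -> x * r + t + d <= K ->
  G (x * r + t + d) <= G (x * r + t).
Proof.
move=> xt tdr tdK; apply: split_count_gap_run => // j /andP [jl jr].
by rewrite -(subnKC (leq_trans (leq_addr t _) jl)) inGS_mulr_addn; lia.
Qed.

Variables alpha beta : nat.
Hypotheses (beta_lt_r : beta < r) (H_half : (alpha * r + beta).+1 = K./2).
Local Notation H := (alpha * r + beta).+1.

Lemma split_count_mulr_min y : y * r <= H ->
  minn (G H) (G (alpha * r)) <= G (y * r).
Proof.
move=> yrH; case: (leqP y alpha) => [y_le | alpha_lt].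
  rewrite geq_min; apply/orP; right.
  have -> : alpha * r = y * r + (alpha - y) * r by rewrite -mulnDl subnKC.
  apply: split_count_addmulr; [exact: inGS_addr | nia].
have -> : y * r = H by nia.
exact: geq_minl.
Qed.

Lemma split_count_left_min i : i <= H -> minn (G H) (G (alpha * r)) <= G i.
Proof.
have r_gt0 : 0 < r by lia.
set x := i %/ r; set t := i %% r.
have -> : i = x * r + t by rewrite /x /t -divn_eq.
have t_lt_r : t < r by rewrite ltn_mod.
move=> iH; case: (leqP t x.+1) => [tx | xt].
  apply: leq_trans (split_count_mulr_min (_ : x * r <= H)) _; first lia.
  by apply: split_count_block_rise; lia.
case: (leqP (x.+1 * r) H) => [x1H | Hx1].
  apply: leq_trans (split_count_mulr_min x1H) _.
  have -> : x.+1 * r = x * r + t + (r - t) by rewrite mulSnr; lia.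
  by apply: split_count_block_fall; lia.
apply: leq_trans (geq_minl _ _) _.
rewrite {1}(_ : H = x * r + t + (H - (x * r + t))); last by lia.
by apply: split_count_block_fall; rewrite mulSnr in Hx1; lia.
Qed.

Lemma split_count_min i : i <= K -> minn (G H) (G (alpha * r)) <= G i.
Proof.
move=> iK; case: (leqP i H) => [iH | Hi]; first exact: split_count_left_min.
by rewrite -(split_count_sym _ iK); apply: split_count_left_min; lia.
Qed.

End SplitCountSemigroup.

Lemma ltilde_addE r K (a b : int) i : (a + 1 = i%:Z)%R -> (b + 1 = (K - i)%:Z)%R ->
  ltilde r a + ltilde r b = split_count (inGS r) K i.
Proof. by move=> ai bi; rewrite /ltilde ai bi. Qed.

Lemma Rfun_split_count r N : Rfun r N%:Z =
  \big[minn/split_count (inGS r) N.+2 0]_(0 <= i < N.+3) split_count (inGS r) N.+2 i.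
Proof.
rewrite /Rfun (_ : (N%:Z + 3)%R = N.+3) /=; last by lia.
rewrite (_ : ltilde r (-1) + _ = split_count (inGS r) N.+2 0); last by apply: ltilde_addE; lia.
by apply: eq_big_nat => i /andP [_ iN]; apply: ltilde_addE; lia.
Qed.

Lemma Rfun_min r N alpha beta : beta < r -> N./2 = alpha * r + beta ->
  Rfun r N%:Z = minn (split_count (inGS r) N.+2 (N./2).+1)
                     (split_count (inGS r) N.+2 (alpha * r)).
Proof.
move=> beta_lt_r N_half; have H_half : (alpha * r + beta).+1 = N.+2./2 by lia.
rewrite Rfun_split_count N_half; apply/eqP.
rewrite eqn_leq leq_min -andbA -minEnat; apply/and3P; split;
  try by apply: (@ge_bigmin_seq _ nat); rewrite ?mem_index_iota //; lia.
rewrite big_seq; apply: (@le_bigmin _ nat) => [|i]; first exact: split_count_min.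
by rewrite mem_index_iota => /andP [_ iN]; apply: split_count_min; lia.
Qed.

Theorem proposition3p15 (r g N alpha beta : nat) :
  g = (r * (r - 1))./2 ->
  (N%:Z <= 2 * g%:Z - 2)%R ->
  N./2 = (alpha * r + beta)%N ->
  (beta < r)%N ->
  (1 <= alpha)%N ->
  (gap r (N./2)%:Z ->
     Rfun r N%:Z =
     minn (ltilde r (N./2)%:Z + ltilde r (N - N./2)%:Z)
          (ltilde r ((alpha * r)%:Z - 1) + ltilde r (N%:Z - (alpha * r)%:Z + 1)))
  /\
  (inGSz r (N./2)%:Z ->
     Rfun r N%:Z =
     (ltilde r ((alpha * r)%:Z - 1) + ltilde r (N%:Z - (alpha * r)%:Z + 1))%N).
Proof.
move=> _ _ N_half beta_lt_r _.
rewrite (Rfun_min beta_lt_r N_half) (ltilde_addE _ (K := N.+2) (i := (N./2).+1)); try lia.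
rewrite (ltilde_addE _ (K := N.+2) (i := alpha * r)); try lia.
split=> // /= half_in_GS.
have beta_le_alpha : beta <= alpha by rewrite -(inGS_mulr_addn _ beta_lt_r) -N_half.
apply/minn_idPr; rewrite N_half -addnS.
by apply: split_count_block_rise; lia.
Qed.
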